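(* Let $\delta,\xi\in(0,1/2)$, $\lambda\in(0,1/2)$, let $n$ be a positive integer and $M=2^{n(C-\xi)}$ an integer. Suppose $\{(\mathbf u_k,\mathcal E_k):k=1,\dots,M\}$ is a transmission code with distinct $\mathbf u_k\in\mathcal X^n$, pairwise disjoint $\mathcal E_k\subseteq\mathcal Y^n$, and $W(\mathcal E_k^c\mid\mathbf u_k)\le\delta$ for all $k$; let $\mathcal Z=\{\mathbf u_1,\dots,\mathbf u_M\}$. Let $\epsilon$ satisfy $\frac16>\epsilon\ge 2^{-n(C-\xi)}$, let $M'=\lceil\epsilon M\rceil$, and let $m$ be a positive integer with $2^m\le \binom{M'}{\lceil\lambda M'\rceil}^{-1}M'^{-1}\left(\frac{1-\epsilon}{2\epsilon}\right)^{\lceil\lambda M'\rceil}$. Let $(A_i)_{i\in\{0,1\}^m}$ be subsets of $\mathcal Z$ with $|A_i|=M'$ and $|A_i\cap A_{i'}|<\lambda M'$ for $i\ne i'$. Define the encoder $Q_i(\mathbf x)=\mathbf 1_{\mathbf x\in A_i}/|A_i|$ for $i\in\{0,1\}^m$ and, for each $f\in\mathcal F_m^{\mathrm W}(\le S)$, the decoding set $\mathcal D_f=\bigcup_{k:\,\mathbf u_k\in B_f}\mathcal E_k$ where $B_f=\bigcup_{\ell\in f^{-1}[1]}A_\ell$. Then this is an $(n,m,\mathcal F_m^{\mathrm W}(\le S),\lambda_1,\lambda_2)$ BFC code with $\lambda_1=\delta$ and $\lambda_2=S\lambda+\delta$.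
   Context: A channel with input alphabet $\mathcal X$ and output alphabet $\mathcal Y$ is given by conditional distributions $W(\cdot\mid x^n)$ on $\mathcal Y^n$; $C$ is its Shannon capacity. $\mathcal F_m$ is the set of all Boolean functions $\{0,1\}^m\to\{0,1\}$ and $\mathcal F_m^{\mathrm W}(\le S)=\{f\in\mathcal F_m:|f^{-1}[1]|\le S\}$. For $\mathcal F\subseteq\mathcal F_m$, an $(n,m,\mathcal F,\lambda_1,\lambda_2)$ BFC code consists of probability distributions $Q_i$ on $\mathcal X^n$ ($i\in\{0,1\}^m$) and sets $D_f\subseteq\mathcal Y^n$ ($f\in\mathcal F$) such that for all $i,f$: if $f(i)=1$ then $Q_iW(D_f^c)\le\lambda_1$, and if $f(i)=0$ then $Q_iW(D_f)\le\lambda_2$, where $QW(D)=\sum_xQ(x)W(D\mid x)$. *)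

From HB Require Import structures.
From mathcomp Require Import all_boot all_order all_algebra.
From mathcomp Require Import reals exp.
Set Implicit Arguments. Unset Strict Implicit. Unset Printing Implicit Defensive.
Import Order.TTheory GRing.Theory Num.Theory.
Local Open Scope ring_scope.

(* A channel: for every blocklength n, a stochastic matrix
   W n x y = W(y | x) with x in X^n, y in Y^n. *)
Definition channel (R : realType) (X Y : finType) :=
  forall n : nat, n.-tuple X -> n.-tuple Y -> R.

Definition is_channel (R : realType) (X Y : finType) (W : channel R X Y) :=
  forall n (x : n.-tuple X),
    (forall y, 0 <= W n x y) /\ \sum_(y : n.-tuple Y) W n x y = 1.

Definition Wset (R : realType) (X Y : finType) (W : channel R X Y) n
  (D : {set n.-tuple Y}) (x : n.-tuple X) : R :=
  \sum_(y in D) W n x y.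

Definition QW (R : realType) (X Y : finType) (W : channel R X Y) n
  (Q : n.-tuple X -> R) (D : {set n.-tuple Y}) : R :=
  \sum_(x : n.-tuple X) Q x * Wset W D x.

Definition is_transmission_code (R : realType) (X Y : finType)
  (W : channel R X Y) n M (u : 'I_M -> n.-tuple X)
  (E : 'I_M -> {set n.-tuple Y}) (d : R) :=
  (forall k k', k != k' -> [disjoint E k & E k']) /\
  (forall k, Wset W (~: E k) (u k) <= d).

Definition achievable_rate (R : realType) (X Y : finType) (W : channel R X Y)
  (r : R) :=
  forall d : R, 0 < d -> exists N : nat, forall n : nat, (N <= n)%N ->
    exists M : nat, exists u : 'I_M -> n.-tuple X,
    exists E : 'I_M -> {set n.-tuple Y},
      2 `^ (n%:R * r) <= M%:R /\ is_transmission_code W u E d.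

Definition is_capacity (R : realType) (X Y : finType) (W : channel R X Y)
  (C : R) :=
  (forall r, achievable_rate W r -> r <= C) /\
  (forall c, (forall r, achievable_rate W r -> r <= c) -> C <= c).

Definition is_distribution (R : realType) (T : finType) (Q : T -> R) :=
  (forall x, 0 <= Q x) /\ \sum_x Q x = 1.

Definition boolfun (m : nat) := {ffun m.-tuple bool -> bool}.

Definition weight_le (m S : nat) : pred (boolfun m) :=
  fun f => (#|[set i | f i]| <= S)%N.
Arguments weight_le : clear implicits.

Definition is_BFC_code (R : realType) (X Y : finType) (W : channel R X Y)
  (n m : nat) (F : pred (boolfun m))
  (Q : m.-tuple bool -> n.-tuple X -> R) (D : boolfun m -> {set n.-tuple Y})
  (l1 l2 : R) :=
  (forall i, is_distribution (Q i)) /\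
  (forall i f, F f ->
     (f i -> QW W (Q i) (~: D f) <= l1) /\
     (~~ f i -> QW W (Q i) (D f) <= l2)).

From mathcomp Require Import all_boot all_order all_algebra.
From mathcomp Require Import reals exp.
Set Implicit Arguments. Unset Strict Implicit. Unset Printing Implicit Defensive.
Import Order.TTheory GRing.Theory Num.Theory.
Local Open Scope ring_scope.

(* Under the uniform input distribution on A_i every codeword u_k in A_i is
   decoded by E_k.  If f(i) = 1 then A_i lies in B_f, so D_f contains E_k and
   the error is at most delta.  If f(i) = 0, a codeword of A_i outside B_f has
   E_k disjoint from D_f and contributes at most delta, while the codewords of
   A_i inside B_f make up the fraction |A_i ∩ B_f| / |A_i| <= S lambda, since
   B_f is a union of at most S sets A_l, l <> i, each meeting A_i in fewer than
   lambda M' points.  The bound on 2^m, the capacity and the rate only serve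
   to guarantee that such A_i exist. *)

Lemma card_setI_bigcup_le (I T : finType) (P : pred I) (F : I -> {set T})
    (A : {set T}) :
  (#|A :&: \bigcup_(i | P i) F i| <= \sum_(i | P i) #|A :&: F i|)%N.
Proof.
elim/big_rec2: _ => [|i y U _ IH]; first by rewrite setI0 cards0.
by rewrite setIUr (leq_trans (leq_card_setU _ _)) ?leq_add2l.
Qed.

Lemma card_setI_bigcup_le_mul (R : numDomainType) (I T : finType) (P : pred I)
    (F : I -> {set T}) (A : {set T}) (c : R) :
  (forall i, P i -> #|A :&: F i|%:R <= c) ->
  #|A :&: \bigcup_(i | P i) F i|%:R <= #|P|%:R * c.
Proof.
move=> AF_le; apply: (le_trans (y := \sum_(i | P i) (#|A :&: F i|%:R : R))).
  by rewrite -natr_sum ler_nat card_setI_bigcup_le.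
by rewrite mulr_natl -sumr_const ler_sum.
Qed.

Definition unif {R : numFieldType} {T : finType} (A : {set T}) : T -> R :=
  fun x => if x \in A then (#|A|%:R)^-1 else 0.

Lemma unif_distribution (R : realType) (T : finType) (A : {set T}) :
  (0 < #|A|)%N -> is_distribution (@unif R T A).
Proof.
move=> A_gt0; split=> [x | ].
  by rewrite /unif; case: ifP; rewrite ?invr_ge0.
rewrite -big_mkcond /= sumr_const -(mulr_natr (#|A|%:R)^-1) mulVf //.
by rewrite pnatr_eq0 -lt0n.
Qed.

Section Channel.
Variables (R : realType) (X Y : finType) (W : channel R X Y) (n : nat).
Hypothesis W_channel : is_channel W.

Lemma Wset_subset (D D' : {set n.-tuple Y}) x :
  D \subset D' -> Wset W D x <= Wset W D' x.
Proof.
move=> DD'; rewrite /Wset [leLHS]big_mkcond [leRHS]big_mkcond.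
apply: ler_sum => y _; case: ifP => [/(subsetP DD') -> // | _].
by case: ifP => _ //; case: (W_channel x).
Qed.

Lemma Wset_le1 (D : {set n.-tuple Y}) x : Wset W D x <= 1.
Proof.
case: (W_channel x) => _ <-; rewrite (le_trans (Wset_subset x (subsetT D))) //.
by rewrite /Wset; under eq_bigl do rewrite inE.
Qed.

Lemma QW_unif (A : {set n.-tuple X}) D :
  QW W (unif A) D = (#|A|%:R)^-1 * \sum_(x in A) Wset W D x.
Proof.
rewrite /QW /unif mulr_sumr [RHS]big_mkcond; apply: eq_bigr => x _.
by case: ifP => _; rewrite ?mul0r.
Qed.

Lemma QW_unif_le_frac (A B : {set n.-tuple X}) D c :
  (0 < #|A|)%N -> 0 <= c ->
  (forall x, x \in A -> x \notin B -> Wset W D x <= c) ->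
  QW W (unif A) D <= #|A :&: B|%:R / #|A|%:R + c.
Proof.
move=> A_gt0 c_ge0 AB_le.
have A_neq0 : (#|A|%:R : R) != 0 by rewrite pnatr_eq0 -lt0n.
have sum_le : \sum_(x in A) Wset W D x <= \sum_(x in A) ((x \in B)%:R + c).
  apply: ler_sum => x xA; case: (boolP (x \in B)) => xB.
    by rewrite (le_trans (Wset_le1 _ _)) // lerDl.
  by rewrite add0r AB_le.
have sum_mem : \sum_(x in A) ((x \in B)%:R : R) = #|A :&: B|%:R.
  rewrite -natr_sum; congr (_%:R); rewrite -big_mkcondr sum1_card.
  by apply: eq_card => x; rewrite !inE.
rewrite QW_unif (le_trans (ler_wpM2l _ sum_le)) ?invr_ge0 // big_split /=.
rewrite sum_mem sumr_const -(mulr_natr c) mulrDr mulrCA mulVf // mulr1.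
by rewrite mulrC.
Qed.

Lemma QW_unif_le (A : {set n.-tuple X}) D c :
  (0 < #|A|)%N -> 0 <= c -> (forall x, x \in A -> Wset W D x <= c) ->
  QW W (unif A) D <= c.
Proof.
move=> A_gt0 c_ge0 A_le.
have := @QW_unif_le_frac A set0 D c A_gt0 c_ge0 (fun x xA _ => A_le x xA).
by rewrite setI0 cards0 mul0r add0r.
Qed.

Section TransmissionCode.
Variables (M : nat) (u : 'I_M -> n.-tuple X) (E : 'I_M -> {set n.-tuple Y}).
Variable delta : R.
Hypothesis code : is_transmission_code W u E delta.

Definition decoder (B : {set n.-tuple X}) : {set n.-tuple Y} :=
  \bigcup_(k | u k \in B) E k.

Lemma Wset_compl_decoder (B : {set n.-tuple X}) k :
  u k \in B -> Wset W (~: decoder B) (u k) <= delta.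
Proof.
move=> ukB; apply: le_trans (code.2 k); apply: Wset_subset.
by rewrite setCS (bigcup_sup k).
Qed.

Lemma Wset_decoder (B : {set n.-tuple X}) k :
  u k \notin B -> Wset W (decoder B) (u k) <= delta.
Proof.
move=> ukB; apply: le_trans (code.2 k); apply: Wset_subset.
apply/bigcupsP => k' uk'B; rewrite -disjoints_subset code.1 //.
by apply: contraNneq ukB => <-.
Qed.

End TransmissionCode.
End Channel.

Theorem lemma3 (R : realType) (X Y : finType) (W : channel R X Y) (C : R)
  (delta xi lambda eps : R) (n M M' L m S : nat)
  (u : 'I_M -> n.-tuple X) (E : 'I_M -> {set n.-tuple Y})
  (A : m.-tuple bool -> {set n.-tuple X}) :
  is_channel W -> is_capacity W C ->
  0 < delta < 1/2 -> 0 < xi < 1/2 -> 0 < lambda < 1/2 ->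
  (0 < n)%N ->
  M%:R = 2 `^ (n%:R * (C - xi)) ->
  injective u -> is_transmission_code W u E delta ->
  eps < 1/6 -> 2 `^ (- (n%:R * (C - xi))) <= eps ->
  (M' : int) = Num.ceil (eps * M%:R) ->
  (L : int) = Num.ceil (lambda * M'%:R) ->
  (0 < m)%N ->
  2 ^+ m <= ('C(M', L)%:R)^-1 * (M'%:R)^-1 * ((1 - eps) / (2 * eps)) ^+ L ->
  (forall i, A i \subset [set u k | k : 'I_M]) ->
  (forall i, #|A i| = M') ->
  (forall i i', i != i' -> #|A i :&: A i'|%:R < lambda * M'%:R) ->
  is_BFC_code W (weight_le m S)
    (fun i x => if x \in A i then (#|A i|%:R)^-1 else 0)
    (fun f => \bigcup_(k : 'I_M | u k \in \bigcup_(l | f l) A l) E k)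
    delta (S%:R * lambda + delta).
Proof.
move=> W_channel _ /andP[delta_gt0 _] _ /andP[lambda_gt0 _] _ M_def _ code _
  eps_ge M'_def _ _ _ A_sub A_card A_overlap.
have M'_gt0 : (0 < M')%N.
  have M_gt0 : 0 < (M%:R : R) by rewrite M_def powR_gt0.
  have eps_gt0 : 0 < eps by rewrite (lt_le_trans _ eps_ge) ?powR_gt0.
  by rewrite -ltz_nat M'_def ceil_gt0 mulr_gt0.
have A_gt0 i : (0 < #|A i|)%N by rewrite A_card.
have A_codeword i x : x \in A i -> exists k, x = u k.
  by move=> /(subsetP (A_sub i)) /imsetP[k _ ->]; exists k.
split=> [i | i f f_weight]; first exact: unif_distribution.
split=> f_i.
- apply: (QW_unif_le W_channel (A_gt0 i) (ltW delta_gt0)) => x xA.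
  have [k x_def] := A_codeword i x xA; rewrite {}x_def in xA *.
  by apply: (Wset_compl_decoder W_channel code); apply/bigcupP; exists i.
- apply: le_trans (QW_unif_le_frac W_channel (A_gt0 i) (ltW delta_gt0) _) _.
    move=> x xA; case: (A_codeword i x xA) => k ->.
    exact: (Wset_decoder W_channel code).
  rewrite lerD2r A_card ler_pdivrMr ?ltr0n //.
  apply: le_trans (card_setI_bigcup_le_mul (c := lambda * M'%:R) _) _.
    by move=> l f_l; apply/ltW/A_overlap; apply: contraNneq f_i => ->.
  rewrite mulrA !ler_wpM2r ?(ltW lambda_gt0) // ler_nat.
  by move: f_weight; rewrite /weight_le cardsE.
Qed.
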